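(* Let $m\ge 2$ and $a_1,a_2$ integers coprime to $m$, and let $G=\langle x_1,x_2\mid c_{12}^m,\ \overline{c_{12}^{(x_1)}}\,c_{12}^{a_1},\ \overline{c_{12}^{(x_2)}}\,c_{12}^{a_2}\rangle$, whose commutator subgroup is cyclic of order $m$ generated by $c_{12}$. Then an element $z=x_1^{n_1}x_2^{n_2}c_{12}^{n_c}$ ($n_1,n_2,n_c\in\mathbb Z$) lies in the center of $G$ if and only if $$n_c(a_1-1)\equiv S_{n_2}(a_2)\pmod m,\qquad n_c(a_2-1)\equiv S_{-n_1}(a_1)\pmod m.$$
   Context: Notation: $\bar g=g^{-1}$, $c_{gh}=\bar g\,\bar h\,g\,h$, $c^{(g)}=\bar g\,c\,g$, $c_{12}=c_{x_1x_2}$. For an integer $a$ coprime to $m$, $a^{-1}$ denotes its inverse modulo $m$, and $S_n(a)=(a^n-1)/(a-1)$ understood modulo $m$ as $S_n(a)=\sum_{s=0}^{n-1}a^s$ for $n\ge0$ and $S_n(a)=-\sum_{s=1}^{|n|}a^{-s}$ for $n<0$ (so $S_n(1)=n$). *)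

From mathcomp Require Import all_boot all_order all_algebra.
From Stdlib Require List.
Set Implicit Arguments. Unset Strict Implicit. Unset Printing Implicit Defensive.
Import GRing.Theory Num.Theory.
Local Open Scope ring_scope.

(* Words in the free group on x1, x2.  A letter is (g, e): g = false for x1,
   g = true for x2; e = true means the inverse letter. *)
Definition letter := (bool * bool)%type.
Definition word := seq letter.

Definition flip (l : letter) : letter := (l.1, ~~ l.2).
Definition winv (w : word) : word := rev (map flip w).

Definition wpow (w : word) (n : int) : word :=
  match n with
  | Posz k => flatten (nseq k w)
  | Negz k => flatten (nseq k.+1 (winv w))
  end.

Definition X1 : word := [:: (false, false)].
Definition X2 : word := [:: (true, false)].

Definition comm (g h : word) : word := winv g ++ winv h ++ g ++ h.
Definition conjw (c g : word) : word := winv g ++ c ++ g.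
Definition C12 : word := comm X1 X2.

Definition relators (m : nat) (a1 a2 : int) : seq word :=
  [:: wpow C12 m%:Z;
      winv (conjw C12 X1) ++ wpow C12 a1;
      winv (conjw C12 X2) ++ wpow C12 a2].

(* Equality in the group presented by generators x1, x2 and relators R:
   the smallest congruence (w.r.t. concatenation) on words identifying
   l l^-1 with the empty word and every relator with the empty word. *)
Inductive geq (R : seq word) : word -> word -> Prop :=
| geq_refl w : geq R w w
| geq_sym u v : geq R u v -> geq R v u
| geq_trans u v w : geq R u v -> geq R v w -> geq R u w
| geq_ctx p q u v : geq R u v -> geq R (p ++ u ++ q) (p ++ v ++ q)
| geq_free (l : letter) : geq R [:: l; flip l] [::]
| geq_rel r : List.In r R -> geq R r [::].

Definition central (R : seq word) (z : word) : Prop :=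
  forall w : word, geq R (z ++ w) (w ++ z).

(* inverse of a modulo m (a coprime to m): Bezout coefficient *)
Definition invmod (m a : int) : int := (egcdz a m).1.

Definition Sgeom (m : int) (n a : int) : int :=
  match n with
  | Posz k => \sum_(s < k) a ^+ s
  | Negz k => - \sum_(1 <= s < k.+2) (invmod m a) ^+ s
  end.

(* G acts on the right of Z x Z x Z/m by multiplying the normal forms
   x1^p x2^q c12^k, using c12^k x1 = x1 c12^(k a1), c12^k x2 = x2 c12^(k a2)
   and x2^q x1 = x1 x2^q c12^(-S_q(a2)).  The relators act trivially, and every
   word equals in G the normal form of the image of the origin under it, so z
   is central iff z x_i and x_i z send the origin to the same point (i = 1, 2).
   For z = x1^n1 x2^n2 c12^nc this reads nc a1 - S_n2(a2) = nc and
   nc a2 = nc - S_n1(a1) a2^n2 in Z/m.  The first is the first congruence;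
   given it, both the second equation and the second congruence force
   a1^n1 a2^n2 = 1, and then they agree because a1^n1 S_(-n1)(a1) = -S_n1(a1). *)

From Pilot Require Import Defs.
From mathcomp Require Import all_boot all_order all_algebra.
From mathcomp Require Import ring zify.
From Stdlib Require Import Setoid Morphisms.
Import GRing.Theory Num.Theory.
Local Open Scope ring_scope.

Add Parametric Relation (R : seq word) : word (Defs.geq R)
  reflexivity proved by (@geq_refl R)
  symmetry proved by (@geq_sym R)
  transitivity proved by (@geq_trans R) as geq_setoid.

#[local] Hint Resolve geq_refl : core.

Lemma geq_cat {R u u' v v'} :
  Defs.geq R u u' -> Defs.geq R v v' -> Defs.geq R (u ++ v) (u' ++ v').
Proof.
move=> Hu Hv; apply: geq_trans (geq_ctx [::] v Hu) _.
by have := geq_ctx u' [::] Hv; rewrite !cats0.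
Qed.

Add Parametric Morphism (R : seq word) : (@cat letter)
  with signature Defs.geq R ==> Defs.geq R ==> Defs.geq R as cat_geq_morphism.
Proof. by move=> *; apply: geq_cat. Qed.

Lemma flipK : involutive flip.
Proof. by case=> g e; rewrite /flip negbK. Qed.

Lemma winv_cat u v : winv (u ++ v) = winv v ++ winv u.
Proof. by rewrite /winv map_cat rev_cat. Qed.

Lemma winvK : involutive winv.
Proof. by move=> w; rewrite /winv map_rev revK -map_comp (eq_map flipK) map_id. Qed.

Lemma wpowSr w (n : nat) : wpow w n.+1 = wpow w n ++ w.
Proof. by elim: n => [|n IH] /=; rewrite ?cats0 // -catA -IH. Qed.

Lemma int_ind_step (P : int -> Prop) :
  P 0 -> (forall q, P q <-> P (q + 1)) -> forall q, P q.
Proof.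
move=> P0 PS; elim/int_rect => [//|n Pn|n Pn].
  by rewrite -addn1 PoszD; apply/(PS n).
by apply/(PS _); rewrite -addn1 PoszD opprD addrNK.
Qed.

Lemma int_step_const {T : Type} {f : int -> T} :
  (forall q, f (q + 1) = f q) -> forall q, f q = f 0.
Proof. by move=> fS; apply: int_ind_step => // q; rewrite fS. Qed.

Section FreeReduction.

Variable R : seq word.
Local Notation "u ≡ v" := (Defs.geq R u v) (at level 70).

Lemma catwV w : w ++ winv w ≡ [::].
Proof.
elim: w => [|l w IH] /=; first reflexivity.
have -> : winv (l :: w) = winv w ++ [:: flip l] by rewrite /winv /= rev_cons cats1.
by rewrite -cat1s [w ++ _]catA IH; apply: geq_free.
Qed.

Lemma catVw w : winv w ++ w ≡ [::].
Proof. by rewrite -{2}(winvK w); apply: catwV. Qed.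

Lemma catKw u v : winv u ++ u ++ v ≡ v.
Proof. by rewrite catA catVw. Qed.

Lemma catKVw u v : u ++ winv u ++ v ≡ v.
Proof. by rewrite catA catwV. Qed.

Lemma cancel_catr q u v : u ++ q ≡ v ++ q -> u ≡ v.
Proof.
by move=> uv; rewrite -[u]cats0 -[v]cats0 -(catwV q) !catA uv.
Qed.

Lemma wpowS w q : wpow w (q + 1) ≡ wpow w q ++ w.
Proof.
case: q => [n|[|n]].
- by rewrite (_ : Posz n + 1 = n.+1) ?wpowSr //; lia.
- by rewrite /= cats0 catVw.
- have -> : Negz n.+1 + 1 = Negz n by rewrite !NegzE; lia.
  by rewrite -[wpow w (Negz n.+1)]/(wpow (winv w) n.+2) wpowSr -catA catVw cats0.
Qed.

Lemma wpowD w x y : wpow w (x + y) ≡ wpow w x ++ wpow w y.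
Proof.
elim/int_ind_step: y => [|y]; first by rewrite addr0 cats0.
rewrite addrA !wpowS catA; split=> [-> //|]; exact: cancel_catr.
Qed.

Lemma wpowM_nil w n : wpow w n ≡ [::] -> forall q, wpow w (q * n) ≡ [::].
Proof.
move=> wn; elim/int_ind_step => [|q]; first by rewrite mul0r.
by rewrite mulrDl mul1r wpowD wn cats0.
Qed.

Lemma conj_relator c x v : winv (conjw c x) ++ v ≡ [::] -> c ++ x ≡ x ++ v.
Proof.
move=> rel; rewrite -(catKVw (c ++ x) (x ++ v)) winv_cat.
by rewrite /conjw !winv_cat winvK -!catA in rel; rewrite -!catA rel cats0.
Qed.

Lemma wpow_conj c x a : c ++ x ≡ x ++ wpow c a ->
  forall n : nat, wpow c n ++ x ≡ x ++ wpow c (n%:Z * a).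
Proof.
move=> cx; elim=> [|n IH]; first by rewrite mul0r cats0.
have -> : n.+1%:Z * a = a + n%:Z * a by rewrite -addn1 PoszD mulrDl mul1r addrC.
by rewrite /= -catA IH catA cx -catA -wpowD.
Qed.

Lemma commute_winv {z w} : z ++ w ≡ w ++ z -> z ++ winv w ≡ winv w ++ z.
Proof.
move=> zw; rewrite -(catKw w (z ++ winv w)) [w ++ (z ++ _)]catA -zw.
by rewrite -catA catwV cats0.
Qed.

Lemma central_gens z : z ++ X1 ≡ X1 ++ z -> z ++ X2 ≡ X2 ++ z -> central R z.
Proof.
move=> z1 z2.
have zl l : z ++ [:: l] ≡ [:: l] ++ z.
  by case: l => [[] []]; [apply: (commute_winv z2) | | apply: (commute_winv z1) |].
elim=> [|l w IH]; first by rewrite cats0.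
by rewrite -cat1s catA zl -catA IH catA.
Qed.

Lemma X2X1 : X2 ++ X1 ≡ X1 ++ X2 ++ winv C12.
Proof. by rewrite catA [winv C12]/= catKVw. Qed.

End FreeReduction.

Arguments wpowM_nil {R w n}.
Arguments conj_relator {R c x v}.
Arguments wpow_conj {R c x a}.

Definition gsum {Z : unitRingType} (b : Z) (q : int) : Z :=
  match q with
  | Posz n => \sum_(i < n) b ^+ i
  | Negz n => - \sum_(1 <= i < n.+2) b^-1 ^+ i
  end.

Section GeometricSums.

Context {Z : unitRingType}.
Implicit Type b : Z.

Lemma gsum0 b : gsum b 0 = 0.
Proof. exact: big_ord0. Qed.

Lemma gsum1 b : gsum b 1 = 1.
Proof. exact: big_ord1. Qed.

Lemma gsumSr b q : gsum b (q + 1) = gsum b q + b ^ q.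
Proof.
case: q => [n|[|n]].
- by rewrite (_ : Posz n + 1 = n.+1) /= ?big_ord_recr //; lia.
- by rewrite (_ : Negz 0 + 1 = 0) // gsum0 /= big_nat1 expr1 exprN1 addNr.
- have -> : Negz n.+1 + 1 = Negz n by rewrite !NegzE; lia.
  by rewrite /= [in RHS]big_nat_recr //= opprD exprVn addrNK.
Qed.

End GeometricSums.

Section CommutativeGeometricSums.

Context {Z : comUnitRingType} {b : Z}.
Hypothesis ub : b \is a GRing.unit.

Lemma expz_gsum q : b ^ q = 1 + (b - 1) * gsum b q.
Proof.
pose f r := b ^ r - (b - 1) * gsum b r.
have fS r : f (r + 1) = f r by rewrite /f gsumSr exprzDr // expr1z; ring.
have := int_step_const fS q; rewrite /f gsum0 mulr0 subr0 => /eqP.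
by rewrite subr_eq addrC => /eqP.
Qed.

Lemma gsumS q : gsum b (q + 1) = 1 + b * gsum b q.
Proof. by rewrite gsumSr expz_gsum; ring. Qed.

Lemma expz_gsumN q : b ^ q * gsum b (- q) = - gsum b q.
Proof.
pose f r := b ^ r * gsum b (- r) + gsum b r.
have fS r : f (r + 1) = f r.
  have gN : gsum b (- r) = 1 + b * gsum b (- (r + 1)) by rewrite -gsumS opprD addrNK.
  by rewrite /f gN gsumSr exprzDr // expr1z; ring.
have := int_step_const fS q; rewrite /f oppr0 gsum0 mulr0 addr0 => /eqP.
by rewrite addr_eq0 => /eqP.
Qed.

End CommutativeGeometricSums.

Lemma center_coeffsE (Z : comUnitRingType) (A B X : Z) (n1 n2 : int) :
  A \is a GRing.unit -> B \is a GRing.unit ->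
  (X * A - gsum B n2 = X /\ X * B = - gsum A n1 * B ^ n2 + X) <->
  (X * (A - 1) = gsum B n2 /\ X * (B - 1) = gsum A (- n1)).
Proof.
move=> uA uB.
have -> : X * A - gsum B n2 = X <-> X * (A - 1) = gsum B n2.
  by split=> [e|<-]; [rewrite -[RHS](subKr (X * A)) e|]; ring.
have -> : X * B = - gsum A n1 * B ^ n2 + X <-> X * (B - 1) = - gsum A n1 * B ^ n2.
  by split=> [e|<-]; [rewrite mulrBr mulr1 e|]; ring.
suff key : X * (A - 1) = gsum B n2 ->
    X * (B - 1) = - gsum A n1 * B ^ n2 <-> X * (B - 1) = gsum A (- n1).
  by split=> -[e1 e2]; split=> //; apply/(key e1).
move=> e1; set y := X * (B - 1).
have ey : (A - 1) * y = B ^ n2 - 1 by rewrite (expz_gsum uB) -e1 /y; ring.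
have eA := expz_gsum uA n1; have eAN := expz_gsumN uA n1.
have swap : A ^ n1 * B ^ n2 = 1 -> - gsum A n1 * B ^ n2 = gsum A (- n1).
  by move=> AB; rewrite -eAN mulrAC AB mul1r.
split=> E; [rewrite -swap // | rewrite swap //].
  by rewrite -[RHS](subKr (B ^ n2)) -ey E eA; ring.
transitivity (A ^ n1 * (B ^ n2 - 1) + A ^ n1); first by ring.
by rewrite -ey E mulrCA eAN eA; ring.
Qed.

Section Action.

Context {Z : comUnitRingType}.
Variables A B : Z.
Hypotheses (uA : A \is a GRing.unit) (uB : B \is a GRing.unit).

(* [rho l (p, q, k)] is the normal form of x1^p x2^q c12^k l when conjugation
   by x1 and x2 raises c12 to the powers A and B. *)
Definition rho (l : letter) (s : int * int * Z) : int * int * Z :=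
  let: (p, q, k) := s in
  match l with
  | (false, false) => (p + 1, q, k * A - gsum B q)
  | (false, true) => (p - 1, q, (k + gsum B q) / A)
  | (true, false) => (p, q + 1, k * B)
  | (true, true) => (p, q - 1, k / B)
  end.

Definition act (w : word) (s : int * int * Z) : int * int * Z :=
  foldl (fun s l => rho l s) s w.

Lemma act_cat u v s : act (u ++ v) s = act v (act u s).
Proof. exact: foldl_cat. Qed.

Lemma rho_flip l s : rho (flip l) (rho l s) = s.
Proof.
by case: s => [[p q] k]; case: l => [[] []] /=; rewrite ?(subrK, addrK, mulrK, divrK).
Qed.

Lemma act_X1 p q k : act X1 (p, q, k) = (p + 1, q, k * A - gsum B q).
Proof. by []. Qed.

Lemma act_X2 p q k : act X2 (p, q, k) = (p, q + 1, k * B).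
Proof. by []. Qed.

Lemma act_geq {R u v} :
  (forall r, List.In r R -> forall s, act r s = s) ->
  Defs.geq R u v -> forall s, act u s = act v s.
Proof.
move=> actR uv; elim: uv => //.
- by move=> ? ? ? _ IH1 _ IH2 s; rewrite IH1 IH2.
- by move=> p q ? ? _ IH s; rewrite !act_cat IH.
- by move=> l s; rewrite /act /= rho_flip.
Qed.

Lemma act_free {u v} : Defs.geq [::] u v -> forall s, act u s = act v s.
Proof. by apply: act_geq. Qed.

Lemma act_winv w s : act (winv w) (act w s) = s.
Proof. by rewrite -act_cat (act_free (catwV _ w)). Qed.

Lemma act_winv_cat u v s : (forall s, act u s = act v s) -> act (winv u ++ v) s = s.
Proof. by move=> uv; rewrite act_cat -uv -{1}(winvK u) act_winv. Qed.

Lemma act_wpow w (F : int -> int * int * Z -> int * int * Z) :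
  (forall s, F 0 s = s) -> (forall z s, F (z + 1) s = act w (F z s)) ->
  forall z s, act (wpow w z) s = F z s.
Proof.
move=> F0 FS; elim/int_ind_step => [//|z].
have wS s : act (wpow w (z + 1)) s = act w (act (wpow w z) s).
  by rewrite (act_free (wpowS _ w z)) act_cat.
split=> IH s; first by rewrite wS IH FS.
by rewrite -[LHS](act_winv w) -wS IH FS act_winv.
Qed.

Lemma act_C12 p q k : act C12 (p, q, k) = (p, q, k + 1).
Proof.
have gq : gsum B q = 1 + B * gsum B (q - 1) by rewrite -gsumS // subrK.
rewrite /act /= !subrK gq [_ / B * A]mulrAC divrK // mulrBl divrK //.
by congr (_, _, _); ring.
Qed.

Lemma act_wpowC12 z p q k : act (wpow C12 z) (p, q, k) = (p, q, k + z%:~R).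
Proof.
rewrite (act_wpow C12 (fun z s => let: (p, q, k) := s in (p, q, k + z%:~R))) //.
  by case=> [[p' q'] k']; rewrite addr0.
by move=> z' [[p' q'] k']; rewrite act_C12 intrD addrA.
Qed.

Lemma act_wpowX1 z p q k :
  act (wpow X1 z) (p, q, k) = (p + z, q, k * A ^ z - gsum B q * gsum A z).
Proof.
pose F z s := let: (p, q, k) := s in (p + z, q, k * A ^ z - gsum B q * gsum A z).
rewrite (act_wpow X1 F) //.
  by case=> [[p' q'] k']; rewrite /F addr0 expr0z mulr1 gsum0 mulr0 subr0.
move=> z' [[p' q'] k']; rewrite /F /= exprzDr // expr1z gsumS // addrA.
by congr (_, _, _); ring.
Qed.

Lemma act_wpowX2 z p q k : act (wpow X2 z) (p, q, k) = (p, q + z, k * B ^ z).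
Proof.
rewrite (act_wpow X2 (fun z s => let: (p, q, k) := s in (p, q + z, k * B ^ z))) //.
  by case=> [[p' q'] k']; rewrite addr0 expr0z mulr1.
by move=> z' [[p' q'] k'] /=; rewrite exprzDr // expr1z addrA mulrA.
Qed.

Lemma act_normal_word x y z p q k :
  act (wpow X1 x ++ wpow X2 y ++ wpow C12 z) (p, q, k) =
  (p + x, q + y, (k * A ^ x - gsum B q * gsum A x) * B ^ y + z%:~R).
Proof. by rewrite !act_cat act_wpowX1 act_wpowX2 act_wpowC12. Qed.

Lemma act_relators {m a1 a2} : m%:R = 0 :> Z -> a1%:~R = A -> a2%:~R = B ->
  forall r, List.In r (relators m a1 a2) -> forall s, act r s = s.
Proof.
move=> m0 hA hB r [<-|[<-|[<-|[]]]] s.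
- by case: s => [[p q] k]; rewrite act_wpowC12 -pmulrn m0 addr0.
- apply: act_winv_cat => {s} [[[p q] k]].
  rewrite /conjw 2!act_cat [act (winv X1) _]/= act_C12 /= act_wpowC12 hA.
  by rewrite subrK mulrDl divrK // mul1r addrAC addrK.
- apply: act_winv_cat => {s} [[[p q] k]].
  rewrite /conjw 2!act_cat [act (winv X2) _]/= act_C12 /= act_wpowC12 hB.
  by rewrite subrK mulrDl divrK // mul1r.
Qed.

End Action.

Arguments rho_flip {Z A B}.
Arguments act_geq {Z A B} uA uB {R u v}.
Arguments act_relators {Z A B} uA uB {m a1 a2}.

Section ResidueArithmetic.

Context {p : nat}.
Hypothesis p_gt1 : (1 < p)%N.

Lemma Zp_natz (k : 'Z_p) : (k : nat)%:Z%:~R = k.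
Proof. by rewrite -pmulrn natr_Zp. Qed.

Lemma Zp_intr_eq0 (z : int) : (z%:~R == 0 :> 'Z_p) = (p%:Z %| z)%Z.
Proof.
have natr_eq0 n : (n%:R == 0 :> 'Z_p) = (p %| n)%N by rewrite -val_eqE /= val_Zp_nat.
case: z => n; first by rewrite -pmulrn natr_eq0.
by rewrite NegzE intrN oppr_eq0 -pmulrn natr_eq0 dvdzE.
Qed.

Lemma eqZp_modz (x y : int) : x%:~R = y%:~R :> 'Z_p <-> (x = y %[mod p])%Z.
Proof.
have -> : (x = y %[mod p])%Z <-> (x == y %[mod p])%Z by split=> /eqP.
by rewrite eqz_mod_dvd -Zp_intr_eq0 intrB subr_eq0; split=> /eqP.
Qed.

Lemma Zp_invmod (a : int) : coprimez a p -> (a%:~R : 'Z_p) * (invmod p a)%:~R = 1.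
Proof.
rewrite /coprimez /invmod; case: egcdzP => u v Bezout _ /eqP gcd1.
have := congr1 (fun z : int => z%:~R : 'Z_p) Bezout.
by rewrite gcd1 /= intrD !intrM -pmulrn pchar_Zp // mulr0 addr0 mulrC.
Qed.

Lemma unitZp_coprimez {a : int} : coprimez a p -> (a%:~R : 'Z_p) \is a GRing.unit.
Proof. by move=> /Zp_invmod inva; apply/unitrPr; exists (invmod p a)%:~R. Qed.

Lemma Sgeom_Zp (n a : int) : coprimez a p ->
  (Sgeom p n a)%:~R = gsum (a%:~R : 'Z_p) n.
Proof.
move=> /Zp_invmod /mulr1_eq inva.
case: n => n /=; rewrite ?intrN rmorph_sum; [|congr (- _)];
  by apply: eq_bigr => i _; rewrite rmorphXn ?inva.
Qed.

End ResidueArithmetic.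

Section NormalForm.

Variables (p : nat) (a1 a2 : int).
Hypothesis p_gt1 : (1 < p)%N.
Local Notation A := (a1%:~R : 'Z_p).
Local Notation B := (a2%:~R : 'Z_p).
Hypotheses (uA : A \is a GRing.unit) (uB : B \is a GRing.unit).
Local Notation "u ≡ v" := (Defs.geq (relators p a1 a2) u v) (at level 70).

Definition c12pow (k : 'Z_p) : word := wpow C12 (k : nat).

Lemma wpowC12_eqmod x y : (x = y %[mod p])%Z -> wpow C12 x ≡ wpow C12 y.
Proof.
move/eqP; rewrite eqz_mod_dvd => /divzK dvd_xy.
have C12p : wpow C12 p ≡ [::] by apply: geq_rel; left.
by rewrite -(subrK y x) wpowD -dvd_xy (wpowM_nil C12p).
Qed.

Lemma wpowC12_Zp z : wpow C12 z ≡ c12pow z%:~R.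
Proof. by apply: wpowC12_eqmod; apply/eqZp_modz; rewrite // Zp_natz. Qed.

Lemma c12pow0 : c12pow 0 = [::].
Proof. by []. Qed.

Lemma c12powD k k' : c12pow k ++ c12pow k' ≡ c12pow (k + k').
Proof. by rewrite -wpowD wpowC12_Zp intrD !Zp_natz. Qed.

Lemma winvC12 : winv C12 ≡ c12pow (-1).
Proof. by rewrite -[winv C12]cats0 -[_ ++ [::]]/(wpow C12 (-1)) wpowC12_Zp rmorphN1. Qed.

Lemma c12pow_conj x a : List.In (winv (conjw C12 x) ++ wpow C12 a) (relators p a1 a2) ->
  forall k, c12pow k ++ x ≡ x ++ c12pow (k * a%:~R).
Proof.
move=> /geq_rel /conj_relator cx k.
by rewrite /c12pow (wpow_conj cx) wpowC12_Zp intrM Zp_natz.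
Qed.

Lemma c12pow_X1 k : c12pow k ++ X1 ≡ X1 ++ c12pow (k * A).
Proof. by apply: c12pow_conj; right; left. Qed.

Lemma c12pow_X2 k : c12pow k ++ X2 ≡ X2 ++ c12pow (k * B).
Proof. by apply: c12pow_conj; right; right; left. Qed.

Lemma wpowX2_X1 q : wpow X2 q ++ X1 ≡ X1 ++ wpow X2 q ++ c12pow (- gsum B q).
Proof.
elim/int_ind_step: q => [|q]; first by rewrite gsum0 oppr0 c12pow0.
set Y := X2 ++ c12pow (-1).
have E1 : (wpow X2 q ++ X1) ++ Y ≡ wpow X2 (q + 1) ++ X1.
  by rewrite wpowS -!catA X2X1 winvC12.
have E2 t : (X1 ++ wpow X2 q ++ c12pow t) ++ Y ≡ X1 ++ wpow X2 (q + 1) ++ c12pow (t * B - 1).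
  by rewrite -!catA [c12pow t ++ _]catA c12pow_X2 -catA c12powD wpowS -!catA.
rewrite -E1 gsumS // (_ : - (1 + B * gsum B q) = - gsum B q * B - 1); last by ring.
rewrite -E2; split=> [-> //|]; exact: cancel_catr.
Qed.

Definition normal_word (s : int * int * 'Z_p) : word :=
  let: (x, y, k) := s in wpow X1 x ++ wpow X2 y ++ c12pow k.

Lemma normal_word_rho l s : normal_word s ++ [:: l] ≡ normal_word (rho A B l s).
Proof.
have normal_word_gen g s' : normal_word s' ++ [:: (g, false)] ≡ normal_word (rho A B (g, false) s').
  case: s' => [[x y] k]; case: g => /=; rewrite -!catA.
    by rewrite c12pow_X2 [wpow X2 y ++ _]catA -wpowS.
  rewrite c12pow_X1 [wpow X2 y ++ _]catA wpowX2_X1 -!catA c12powD.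
  by rewrite [wpow X1 x ++ _]catA -wpowS [- _ + _]addrC.
case: l => g [|]; last exact: normal_word_gen.
rewrite -{1}(rho_flip uA uB (g, true) s) -normal_word_gen -catA.
by rewrite -[[:: (g, false)]]/(winv [:: (g, true)]) catVw cats0.
Qed.

Lemma geq_normal_word w : w ≡ normal_word (act A B w (0, 0, 0)).
Proof.
elim/last_ind: w => [//|w l IH].
by rewrite -cats1 act_cat {1}IH normal_word_rho.
Qed.

Lemma central_act z : central (relators p a1 a2) z <->
  act A B X1 (act A B z (0, 0, 0)) = act A B z (act A B X1 (0, 0, 0)) /\
  act A B X2 (act A B z (0, 0, 0)) = act A B z (act A B X2 (0, 0, 0)).
Proof.
have act_rel := act_relators uA uB (pchar_Zp p_gt1) erefl erefl.
rewrite -!act_cat; split=> [zc | [z1 z2]].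
  by split; apply: (act_geq uA uB act_rel (zc _)).
apply: central_gens; first by rewrite (geq_normal_word (z ++ X1)) z1 -geq_normal_word.
by rewrite (geq_normal_word (z ++ X2)) z2 -geq_normal_word.
Qed.

Lemma central_normalE n1 n2 nc (X := nc%:~R : 'Z_p) :
  central (relators p a1 a2) (wpow X1 n1 ++ wpow X2 n2 ++ wpow C12 nc) <->
  X * A - gsum B n2 = X /\ X * B = - gsum A n1 * B ^ n2 + X.
Proof.
have triple_eq (x y : int) (u v : 'Z_p) : (x, y, u) = (x, y, v) <-> u = v.
  by split=> [[]|->].
rewrite central_act !act_X1 !act_X2 !act_normal_word // !act_X1 !act_X2 gsum0 add0r gsum1.
rewrite !(mul0r, mulr0, subr0, add0r, sub0r, mul1r, oppr0) [n1 + 1]addrC [n2 + 1]addrC.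
by rewrite !triple_eq.
Qed.

End NormalForm.

Theorem proposition14 (m : nat) (a1 a2 n1 n2 nc : int) :
  (2 <= m)%N -> coprimez a1 m%:Z -> coprimez a2 m%:Z ->
  central (relators m a1 a2) (wpow X1 n1 ++ wpow X2 n2 ++ wpow C12 nc) <->
  ((nc * (a1 - 1) = Sgeom m%:Z n2 a2 %[mod m%:Z])%Z /\
   (nc * (a2 - 1) = Sgeom m%:Z (- n1) a1 %[mod m%:Z])%Z).
Proof.
move=> m_gt1 cop1 cop2.
have [uA uB] := (unitZp_coprimez m_gt1 cop1, unitZp_coprimez m_gt1 cop2).
rewrite central_normalE // center_coeffsE //.
by rewrite -!eqZp_modz // !intrM !intrB !Sgeom_Zp.
Qed.
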